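(* Let $\Phi \in \mathbb{R}^{m\times n}$, let $x_0\in\mathbb{R}^n$ be nonzero with support $I\eqdef\{i: x_{0,i}\neq 0\}$, and assume $x_0$ is identifiable, i.e. $x_0$ is a solution of $\min_x\|x\|_1$ subject to $\Phi x=\Phi x_0$. Let $p_1 \in \operatorname{Argmin}_{p\in\mathcal{D}_{x_0}}\|p\|_1$, where $$\mathcal{D}_{x_0} \eqdef \{ p \in \mathbb{R}^m : \Phi_{\cdot,I}^* p = \operatorname{sign}(x_{0,I}),\ \|\Phi^* p\|_\infty \le 1\},$$ let $J \eqdef \{ i : |(\Phi^* p_1)_i| = 1\}$, $S \eqdef \operatorname{supp}(p_1) = \{ j : p_{1,j}\neq 0\}$, $s_J \eqdef \Phi_{\cdot,J}^* p_1 \in\{-1,1\}^{|J|}$ and $q_S \eqdef \operatorname{sign}(p_{1,S}) \in \{-1,1\}^{|S|}$. Assume that $\Phi_{S,J}$ has full rank and that $$s_J \notin \operatorname{Im}(\Phi_{S',J}^* ) \ \ \text{for all } S'\subseteq\{1,\dots,m\} \text{ with } |S'|<|J|, \qquad q_S\notin\operatorname{Im}(\Phi_{S,J'}) \ \ \text{for all } J'\subseteq\{1,\dots,n\} \text{ with } |J'|<|S|.$$ Then $|S|=|J|$ and $\Phi_{S,J}$ is invertible. Consequently, with $T_1 \eqdef \{u\in\mathbb{R}^m : \operatorname{supp}(u)\subseteq S\}$, one has $P_{T_1}\Phi_{\cdot,J} = \mathrm{Id}_{\cdot,S}\Phi_{S,J}$ and $\operatorname{Ker}(P_{T_1}\Phi_{\cdot,J})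 = \{0\}$.
   Context: $\operatorname{sign}$ acts entrywise. $\Phi_{S,J}$ denotes the submatrix of $\Phi$ with rows in $S$ and columns in $J$, a dot meaning all rows/columns are kept, and $\Phi_{S,J}^*\eqdef(\Phi_{S,J})^*$. $\mathrm{Id}_{\cdot,S}$ is the submatrix of the $m\times m$ identity with columns in $S$. $P_V$ is the orthogonal projector onto a subspace $V$; $T_1$ is the orthogonal complement of the subspace parallel to $\partial\|p_1\|_\infty$... more precisely, $T_1=\mathrm{par}(\partial\|p_1\|_1)^\perp$, which equals the set of vectors supported in $S$. *)

From HB Require Import structures.
From mathcomp Require Import all_boot all_order all_algebra.
Set Implicit Arguments. Unset Strict Implicit. Unset Printing Implicit Defensive.
Import Order.TTheory GRing.Theory Num.Theory.
Local Open Scope ring_scope.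

Section Defs.
Variable R : realFieldType.

Definition l1norm {k} (v : 'cV[R]_k) : R := \sum_i `|v i 0|.

Definition supp {k} (v : 'cV[R]_k) : {set 'I_k} := [set i | v i 0 != 0].

(* Phi_{S,J}: rows in S, columns in J (in increasing order, via enum_val) *)
Definition subm {m n} (A : 'M[R]_(m, n)) (S : {set 'I_m}) (J : {set 'I_n})
  : 'M[R]_(#|S|, #|J|) := \matrix_(i, j) A (enum_val i) (enum_val j).

Definition subcols {m n} (A : 'M[R]_(m, n)) (J : {set 'I_n})
  : 'M[R]_(m, #|J|) := \matrix_(i, j) A i (enum_val j).

Definition Id_cols m (S : {set 'I_m}) : 'M[R]_(m, #|S|) :=
  \matrix_(i, j) (i == enum_val j)%:R.

Definition subvec {k} (v : 'cV[R]_k) (S : {set 'I_k}) : 'cV[R]_#|S| :=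
  \col_j v (enum_val j) 0.

Definition identifiable {m n} (Phi : 'M[R]_(m, n)) (x0 : 'cV[R]_n) : Prop :=
  forall x : 'cV[R]_n, Phi *m x = Phi *m x0 -> l1norm x0 <= l1norm x.

Definition in_D {m n} (Phi : 'M[R]_(m, n)) (x0 : 'cV[R]_n) (p : 'cV[R]_m) : Prop :=
  subvec (Phi^T *m p) (supp x0) = map_mx Num.sg (subvec x0 (supp x0)) /\
  (forall i, `|(Phi^T *m p) i 0| <= 1).

Definition sat_set {m n} (Phi : 'M[R]_(m, n)) (p : 'cV[R]_m) : {set 'I_n} :=
  [set i | `|(Phi^T *m p) i 0| == 1].

Definition in_T1 m (S : {set 'I_m}) (u : 'cV[R]_m) : Prop := supp u \subset S.

Definition is_orth_proj m (V : 'cV[R]_m -> Prop) (P : 'M[R]_m) : Prop :=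
  forall u : 'cV[R]_m, V (P *m u) /\
    (forall w, V w -> (u - P *m u)^T *m w = 0).

End Defs.

From HB Require Import structures.
From mathcomp Require Import all_boot all_order all_algebra.
From mathcomp Require Import lra.

Set Implicit Arguments.
Unset Strict Implicit.
Unset Printing Implicit Defensive.
Import Order.TTheory GRing.Theory Num.Theory.
Local Open Scope ring_scope.

(* First-order optimality of p1 for min ||p||_1 over D_{x0}: a direction d
   supported on S whose image Phi^* d vanishes on J keeps p1 - t d in D_{x0}
   for small t > 0, and along it ||p||_1 decreases at rate <sign p1, d>.
   Hence sign(p1_S) is orthogonal to Ker Phi_{S,J}^*, i.e. q_S lies in
   Im Phi_{S,J}.  As also s_J = Phi_{S,J}^* p1_S, the two non-degeneracy
   hypotheses rule out |S| < |J| and |J| < |S|, and a square matrix of full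
   rank is invertible.  Finally P_{T_1} = Id_{.,S} Id_{.,S}^*. *)

Section SelectionMatrices.
Variables (R : realFieldType) (m : nat) (S : {set 'I_m}).
Local Notation E := (Id_cols R S).

Lemma Id_colsEsub : E = colsub enum_val 1%:M.
Proof. by apply/matrixP => i j; rewrite !mxE. Qed.

Lemma trmx_Id_cols_mul p (A : 'M[R]_(m, p)) : E^T *m A = rowsub enum_val A.
Proof. by rewrite Id_colsEsub trmx_mxsub trmx1 [RHS]rowsubE. Qed.

Lemma subvecE (v : 'cV[R]_m) : subvec v S = E^T *m v.
Proof. by rewrite trmx_Id_cols_mul; apply/matrixP => i j; rewrite !mxE (ord1 j). Qed.

Lemma subcolsE k (A : 'M[R]_(k, m)) : subcols A S = A *m E.
Proof.
by rewrite Id_colsEsub mulmx_colsub mulmx1; apply/matrixP => i j; rewrite !mxE.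
Qed.

Lemma submE n (A : 'M[R]_(m, n)) (J : {set 'I_n}) : subm A S J = E^T *m subcols A J.
Proof. by rewrite trmx_Id_cols_mul; apply/matrixP => i j; rewrite !mxE. Qed.

Lemma trmx_Id_cols_Id_cols : E^T *m E = 1%:M.
Proof.
by rewrite trmx_Id_cols_mul; apply/matrixP => i j; rewrite !mxE (inj_eq enum_val_inj).
Qed.

Lemma Id_cols_mul_inj p : injective (@mulmx R _ _ p E).
Proof.
by move=> u v /(congr1 (mulmx E^T)); rewrite !mulmxA trmx_Id_cols_Id_cols !mul1mx.
Qed.

Lemma mul_Id_cols_trmxE p (A : 'M[R]_(m, p)) i j :
  (E *m (E^T *m A)) i j = if i \in S then A i j else 0.
Proof.
rewrite trmx_Id_cols_mul mxE; case: ifPn => iS.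
  rewrite (bigD1 (enum_rank_in iS i)) //= big1 => [|k ki]; rewrite !mxE.
    by rewrite enum_rankK_in // eqxx mul1r addr0.
  by rewrite -{1}(enum_rankK_in iS iS) (inj_eq enum_val_inj) eq_sym (negbTE ki) mul0r.
apply: big1 => k _; rewrite !mxE; case: eqP => [ik|]; last by rewrite mul0r.
by move: iS; rewrite ik enum_valP.
Qed.

Lemma Id_cols_subvec (v : 'cV[R]_m) : supp v \subset S -> E *m subvec v S = v.
Proof.
move=> /subsetP vS; apply/matrixP => i j; rewrite subvecE mul_Id_cols_trmxE (ord1 j).
case: ifPn => // iS; apply/esym/eqP; apply: contraNT iS => vi.
by apply: vS; rewrite inE.
Qed.

Lemma supp_Id_cols_mul (d : 'cV[R]_#|S|) : supp (E *m d) \subset S.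
Proof.
apply/subsetP => i; rewrite inE -[d]mul1mx -trmx_Id_cols_Id_cols -mulmxA.
by rewrite mul_Id_cols_trmxE; case: ifP => // _; rewrite eqxx.
Qed.

Lemma subvec_eq0_in (v : 'cV[R]_m) i : subvec v S = 0 -> i \in S -> v i 0 = 0.
Proof.
by move=> /matrixP v0 iS; have := v0 (enum_rank_in iS i) 0; rewrite !mxE enum_rankK_in.
Qed.

Lemma supp_opp (v : 'cV[R]_m) : supp (- v) = supp v.
Proof. by apply/setP => i; rewrite !inE mxE oppr_eq0. Qed.

Lemma orth_proj_T1_mulE (P : 'M[R]_m) (u : 'cV[R]_m) i :
  is_orth_proj (in_T1 S) P -> (P *m u) i 0 = if i \in S then u i 0 else 0.
Proof.
move=> /(_ u) [/subsetP PuS u_orth]; case: ifP => iS; last first.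
  by apply/eqP; apply: contraFT iS => Pui; apply: PuS; rewrite inE.
have deltaS : in_T1 S (delta_mx i 0 : 'cV[R]_m).
  apply/subsetP => k; rewrite inE mxE.
  by case: (k =P i) => [-> //|_]; rewrite mulr0n eqxx.
move/matrixP: (u_orth _ deltaS) => /(_ 0 0).
by rewrite -colE !mxE => /eqP; rewrite subr_eq0 => /eqP.
Qed.

Lemma orth_proj_T1E (P : 'M[R]_m) : is_orth_proj (in_T1 S) P -> P = E *m E^T.
Proof.
move=> HP; apply/matrixP => i j; rewrite -[E^T]mulmx1 mul_Id_cols_trmxE.
have -> : P i j = (P *m (delta_mx j 0 : 'cV[R]_m)) i 0 by rewrite -colE mxE.
by rewrite orth_proj_T1_mulE // !mxE andbT.
Qed.

End SelectionMatrices.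

Lemma full_rank_invertible (F : fieldType) p q (A : 'M[F]_(p, q)) :
  \rank A = minn p q -> p = q ->
  exists B : 'M[F]_(q, p), A *m B = 1%:M /\ B *m A = 1%:M.
Proof.
move=> rkA pq.
have [B1 AB1] : exists B, A *m B = 1%:M.
  by apply/row_freeP; rewrite /row_free rkA pq minnn.
have [B2 B2A] : exists B, B *m A = 1%:M.
  by apply/row_fullP; rewrite /row_full rkA pq minnn.
have B12 : B1 = B2 by rewrite -[B2]mulmx1 -AB1 mulmxA B2A mul1mx.
by exists B1; rewrite B12 -{1}B12.
Qed.

Section L1Perturbation.
Variable R : realFieldType.

Lemma normrB_sg (x y : R) : x != 0 -> `|y| <= `|x| -> `|x - y| = `|x| - Num.sg x * y.
Proof.
move=> x0; rewrite ler_norml => /andP[yl yu].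
case: (ltrgtP x 0) => [xlt0|xgt0|xeq0]; last by rewrite xeq0 eqxx in x0.
  by rewrite ltr0_sg // ltr0_norm // in yl yu *; rewrite ler0_norm; lra.
by rewrite gtr0_sg // gtr0_norm // in yl yu *; rewrite ger0_norm; lra.
Qed.

Lemma exists_small_scale (T : finType) (P : pred T) (a b : T -> R) :
  (forall i, P i -> 0 < a i) ->
  exists2 t : R, 0 < t & forall s i, 0 <= s <= t -> P i -> `|s * b i| <= a i.
Proof.
move=> a_gt0; pose t := \big[Num.min/1]_(i | P i) (a i / (1 + `|b i|)).
have b1_gt0 i : 0 < 1 + `|b i| by rewrite ltr_pwDl.
exists t; first by apply/bigmin_gtP; split=> // i Pi; rewrite divr_gt0 ?a_gt0.
move=> s i /andP[s_ge0 st] Pi.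
have := bigmin_le_cond 1 (fun i => a i / (1 + `|b i|)) Pi.
rewrite -/t ler_pdivlMr // normrM ger0_norm //; apply: le_trans.
by have := normr_ge0 (b i); nra.
Qed.

Lemma l1norm_subr_sg k (p D : 'cV[R]_k) :
  supp D \subset supp p -> {in supp p, forall i, `|D i 0| <= `|p i 0|} ->
  l1norm (p - D) = l1norm p - ((map_mx Num.sg p)^T *m D) 0 0.
Proof.
move=> /subsetP Dp Dbd; rewrite /l1norm mxE -sumrB; apply: eq_bigr => i _.
rewrite !mxE; have [ip|ip] := boolP (i \in supp p).
  by rewrite normrB_sg ?Dbd //; rewrite inE in ip.
have Di : D i 0 = 0 by apply/eqP; apply: contraNT ip => Di; apply: Dp; rewrite inE.
by move: ip; rewrite inE negbK => /eqP->; rewrite Di subr0 mulr0 subr0.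
Qed.

End L1Perturbation.

Section DualCertificates.
Variables (R : realFieldType) (m n : nat) (Phi : 'M[R]_(m, n)) (x0 : 'cV[R]_n).

Lemma supp_sub_sat_set p : in_D Phi x0 p -> supp x0 \subset sat_set Phi p.
Proof.
move=> [sgp _]; apply/subsetP => k kx0.
have x0k : x0 k 0 != 0 by move: kx0; rewrite inE.
move/matrixP: sgp => /(_ (enum_rank_in kx0 k) 0).
rewrite mxE [RHS]mxE enum_rankK_in // inE => ->.
by rewrite normr_sg mxE enum_rankK_in // x0k.
Qed.

Lemma in_D_subr p D : in_D Phi x0 p ->
  {in sat_set Phi p, forall k, (Phi^T *m D) k 0 = 0} ->
  (forall k, k \notin sat_set Phi p -> `|(Phi^T *m D) k 0| <= 1 - `|(Phi^T *m p) k 0|) ->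
  in_D Phi x0 (p - D).
Proof.
move=> pD DJ Dbd; have /subsetP x0J := supp_sub_sat_set pD; case: pD => sgp bdp.
(* Generalizing the two images keeps [mxE] from unfolding the products. *)
rewrite /in_D mulmxBr; move: sgp bdp DJ Dbd.
move: (Phi^T *m p) (Phi^T *m D) => a b sgp bdp DJ Dbd; split=> [|k].
  by rewrite -sgp; apply/matrixP => k j; rewrite !mxE DJ ?subr0 ?x0J ?enum_valP.
rewrite !mxE; have [kJ|kJ] := boolP (k \in sat_set Phi p); first by rewrite DJ // subr0.
by apply: le_trans (ler_normB _ _) _; have := Dbd k kJ; lra.
Qed.

Variable p1 : 'cV[R]_m.
Hypothesis p1_in_D : in_D Phi x0 p1.
Hypothesis p1_min : forall p, in_D Phi x0 p -> l1norm p1 <= l1norm p.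
Local Notation J := (sat_set Phi p1).
Local Notation S := (supp p1).

Lemma sg_descent_le0 D : supp D \subset S -> {in J, forall k, (Phi^T *m D) k 0 = 0} ->
  ((map_mx Num.sg p1)^T *m D) 0 0 <= 0.
Proof.
move=> DS DJ.
have p1_gt0 i : i \in S -> 0 < `|p1 i 0| by rewrite inE normr_gt0.
have slack_gt0 k : k \notin J -> 0 < 1 - `|(Phi^T *m p1) k 0|.
  by rewrite inE subr_gt0 lt_neqAle => ->; rewrite p1_in_D.2.
have [t1 t1_gt0 t1_small] := exists_small_scale (fun i => D i 0) p1_gt0.
have [t2 t2_gt0 t2_small] := exists_small_scale (fun k => (Phi^T *m D) k 0) slack_gt0.
pose t := Num.min t1 t2.
have t_gt0 : 0 < t by rewrite lt_min t1_gt0.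
have t_ge0 : 0 <= t := ltW t_gt0.
have tD_in_D : in_D Phi x0 (p1 - t *: D).
  apply: in_D_subr => // k kJ; rewrite -scalemxAr mxE; first by rewrite DJ // mulr0.
  by apply: t2_small => //; rewrite t_ge0 ge_min lexx orbT.
have := p1_min tD_in_D; rewrite l1norm_subr_sg.
- by rewrite -scalemxAr mxE lerDl oppr_ge0 pmulr_rle0.
- apply/subsetP => i; rewrite inE mxE mulf_eq0 negb_or => /andP[_ Di].
  by apply: (subsetP DS); rewrite inE.
- by move=> i iS; rewrite mxE; apply: t1_small => //; rewrite t_ge0 ge_min lexx.
Qed.

Lemma sg_descent_eq0 D : supp D \subset S -> {in J, forall k, (Phi^T *m D) k 0 = 0} ->
  ((map_mx Num.sg p1)^T *m D) 0 0 = 0.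
Proof.
move=> DS DJ; apply/le_anti; rewrite sg_descent_le0 //= -oppr_le0.
have -> : - ((map_mx Num.sg p1)^T *m D) 0 0 = ((map_mx Num.sg p1)^T *m - D) 0 0.
  by rewrite mulmxN [RHS]mxE.
apply: sg_descent_le0; first by rewrite supp_opp.
by move=> k kJ; rewrite mulmxN mxE DJ ?oppr0.
Qed.

Lemma sat_sign_subvec : subvec (Phi^T *m p1) J = (subm Phi S J)^T *m subvec p1 S.
Proof.
by rewrite [LHS]subvecE submE subcolsE !trmx_mul trmxK -!mulmxA Id_cols_subvec.
Qed.

Lemma sign_in_range : exists z, map_mx Num.sg (subvec p1 S) = subm Phi S J *m z.
Proof.
set A := subm Phi S J; set q := map_mx _ _.
suff /submxP[z qTE] : (q^T <= A^T)%MS.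
  by exists z^T; rewrite -[q]trmxK qTE trmx_mul trmxK.
rewrite submxE; set K := cokermx A^T; apply/eqP/matrixP => i j.
rewrite (ord1 i) [RHS]mxE.
have ATE : A^T = (Id_cols R J)^T *m Phi^T *m Id_cols R S.
  by rewrite /A submE subcolsE !trmx_mul trmxK.
have sgE : (map_mx Num.sg p1)^T *m Id_cols R S = q^T.
  by rewrite -[LHS]trmxK trmx_mul trmxK -subvecE; apply/matrixP => k l; rewrite !mxE.
have dJ : subvec (Phi^T *m (Id_cols R S *m col j K)) J = 0.
  by rewrite subvecE !mulmxA -ATE colE mulmxA mulmx_coker mul0mx.
have := sg_descent_eq0 (supp_Id_cols_mul _) (fun k => subvec_eq0_in dJ).
by rewrite mulmxA sgE colE mulmxA -colE mxE.
Qed.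

End DualCertificates.

Theorem lemma2 (R : realFieldType) (m n : nat) (Phi : 'M[R]_(m, n))
  (x0 : 'cV[R]_n) (p1 : 'cV[R]_m) :
  x0 != 0 ->
  identifiable Phi x0 ->
  in_D Phi x0 p1 ->
  (forall p, in_D Phi x0 p -> l1norm p1 <= l1norm p) ->
  let J := sat_set Phi p1 in
  let S := supp p1 in
  let sJ := subvec (Phi^T *m p1) J in
  let qS := map_mx Num.sg (subvec p1 S) in
  \rank (subm Phi S J) = minn #|S| #|J| ->
  (forall S' : {set 'I_m}, #|S'| < #|J| ->
     ~ exists y : 'cV[R]_#|S'|, sJ = (subm Phi S' J)^T *m y)%N ->
  (forall J' : {set 'I_n}, #|J'| < #|S| ->
     ~ exists z : 'cV[R]_#|J'|, qS = subm Phi S J' *m z)%N ->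
  (#|S| = #|J| /\
   exists B : 'M[R]_(#|J|, #|S|),
     subm Phi S J *m B = 1%:M /\ B *m subm Phi S J = 1%:M) /\
  (forall P : 'M[R]_m, is_orth_proj (in_T1 S) P ->
     P *m subcols Phi J = Id_cols R S *m subm Phi S J /\
     (forall v : 'cV[R]_#|J|, P *m subcols Phi J *m v = 0 -> v = 0)).
Proof.
(* x0 != 0 and identifiability only make D_{x0} nonempty, which p1 witnesses. *)
move=> _ _ p1_in_D p1_min J S sJ qS rankA noS' noJ'.
have cardSJ : #|S| = #|J|.
  case: (ltngtP #|S| #|J|) => // [ltSJ|ltJS]; exfalso.
  - by apply: (noS' S ltSJ); exists (subvec p1 S); apply: sat_sign_subvec.
  - exact: (noJ' J ltJS (sign_in_range p1_in_D p1_min)).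
have [B [AB BA]] := full_rank_invertible rankA cardSJ.
split; first by split=> //; exists B.
move=> P HP.
have PA : P *m subcols Phi J = Id_cols R S *m subm Phi S J.
  by rewrite (orth_proj_T1E HP) -mulmxA -submE.
split=> // v; rewrite PA -mulmxA -(mulmx0 _ (Id_cols R S)) => /Id_cols_mul_inj Av0.
by rewrite -[v]mul1mx -BA -mulmxA Av0 mulmx0.
Qed.
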